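(* Let $C_1$ and $C_2$ be two linear MDS codes of the same length $n$ over $\mathbb{F}_q$. If $C_1\not\subseteq C_2$, then $wt(C_1\setminus(C_1\cap C_2))=wt(C_1)$.
   Context: An $[n,k,d]_q$ linear code is a $k$-dimensional subspace of $\mathbb{F}_q^n$ with minimum Hamming distance $d$; it is MDS if $d=n-k+1$. For a subset $\mathcal{A}\subseteq\mathbb{F}_q^n$, $wt(\mathcal{A})=\min\{wt(\bm a):\bm a\in\mathcal{A}\setminus\{\bm 0\}\}$, where $wt(\bm a)$ is the Hamming weight (number of nonzero coordinates). *)

From HB Require Import structures.
From mathcomp Require Import all_boot all_order all_algebra.
Set Implicit Arguments. Unset Strict Implicit. Unset Printing Implicit Defensive.
Import GRing.Theory.
Local Open Scope ring_scope.

Definition hwt (F : fieldType) (n : nat) (a : 'rV[F]_n) : nat :=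
  #|[set i : 'I_n | a 0 i != 0]|.

(* wt(A) = min { wt a : a in A, a <> 0 }.  Convention: the value is n
   when A has no nonzero element (the paper never uses this case). *)
Definition minwt (F : finFieldType) (n : nat) (A : {pred 'rV[F]_n}) : nat :=
  \big[minn/n]_(a : 'rV[F]_n | (a \in A) && (a != 0)) hwt a.

Definition MDS (F : finFieldType) (n : nat) (C : {vspace 'rV[F]_n}) : Prop :=
  minwt (mem C) = (n - \dim C + 1)%N.

From HB Require Import structures.
From mathcomp Require Import all_boot all_order all_algebra zify.
Set Implicit Arguments. Unset Strict Implicit. Unset Printing Implicit Defensive.
Import Order.TTheory GRing.Theory.
Local Open Scope ring_scope.

(** Only the MDS property of C1 matters. Any subspace U of F^n not contained
    in V has a vector outside V of weight at most n - dim U + 1, which is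
    wt(C1) when U = C1 is MDS. Indeed, if x in U \ V is heavier, its zeros
    together with one point of its support are fewer than dim U coordinates,
    so some nonzero y in U vanishes on all of them. Then either y is outside
    V, or x - c y is for every c, and c can be chosen to kill a support point
    of y; in both cases U \ V contains a vector of strictly smaller support. *)

Section MinimumWeight.
Variables (F : finFieldType) (n : nat).
Implicit Types A B : {pred 'rV[F]_n}.

Lemma minwt_le_hwt A a : a \in A -> a != 0 -> (minwt A <= hwt a)%N.
Proof.
move=> aA a0; rewrite /minwt -Order.NatOrder.minEnat.
by apply: (@bigmin_le_cond _ nat); rewrite aA.
Qed.

Lemma minwt_sub A B : {subset A <= B} -> (minwt B <= minwt A)%N.
Proof.
move=> sAB; rewrite /minwt -Order.NatOrder.minEnat.
by apply: (@sub_bigmin _ nat) => a /andP[/sAB -> ->].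
Qed.

End MinimumWeight.

Section Support.
Variables (F : fieldType) (n : nat).
Implicit Types (x y : 'rV[F]_n) (U V : {vspace 'rV[F]_n}).

Definition supp x := [set i | x 0 i != 0].

Lemma supp_eq0 x : (supp x == set0) = (x == 0).
Proof.
apply/eqP/eqP => [/setP s0|->]; last by apply/setP => i; rewrite !inE mxE eqxx.
by apply/rowP => i; move: (s0 i); rewrite !inE mxE => /negbFE/eqP.
Qed.

Lemma card_suppC x : (#|~: supp x| + hwt x)%N = n.
Proof. by rewrite addnC cardsC card_ord. Qed.

Lemma exists_nonzero_vanishing U (T : {set 'I_n}) :
  (#|T| < \dim U)%N -> exists2 y, y \in U & (y != 0) && [disjoint supp y & T].
Proof.
move=> ltTU.
pose projT := linfun (mxsub id enum_val : 'rV[F]_n -> 'rV[F]_#|T|).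
set K := (U :&: lker projT)%VS.
have dimK : (0 < \dim K)%N.
  move: ltTU; rewrite -(limg_ker_dim projT U) lt0n; apply: contraTneq => ->.
  by rewrite add0n -leqNgt (leq_trans (dimvS (subvf _))) // dimvf /dim /= mul1n.
exists (vpick K); first by have /memv_capP[] := memv_pick K.
rewrite vpick0 -dimv_eq0 -lt0n dimK /=.
have /memv_capP[_] := memv_pick K.
rewrite memv_ker lfunE /= => /eqP/rowP projT_y.
apply/pred0P => i /=; rewrite !inE; apply/negbTE/andP => -[yi iT].
move: yi (projT_y (enum_rank_in iT i)); rewrite !mxE enum_rankK_in // => yi yi0.
by rewrite yi0 eqxx in yi.
Qed.

Lemma exists_outside_supp_proper U V x y :
    x \in U -> x \notin V -> y \in U -> y != 0 -> supp y \proper supp x ->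
  exists2 z, z \in U & (z \notin V) && (supp z \proper supp x).
Proof.
move=> xU xV yU y0 yx; case yV: (y \in V); last by exists y; rewrite ?yV.
have sub_yx := subsetP (proper_sub yx).
have [l yl] : exists l, l \in supp y by apply/set0Pn; rewrite supp_eq0.
have xl := sub_yx l yl; rewrite inE in yl.
pose c := x 0 l / y 0 l.
exists (x - c *: y); first by rewrite rpredB ?rpredZ.
apply/andP; split.
  by apply: contra xV => zV; rewrite -[x](subrK (c *: y)) rpredD ?rpredZ.
apply/properP; split; last first.
  by exists l; rewrite // inE !mxE divfK // subrr eqxx.
apply/subsetP => i; apply: contraLR => xi.
have yi : i \notin supp y := contra (sub_yx i) xi.
by move: xi yi; rewrite !inE !mxE !negbK => /eqP-> /eqP->; rewrite mulr0 subrr.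
Qed.

Lemma exists_lighter_outside U V x :
    x \in U -> x \notin V -> (n - \dim U + 1 < hwt x)%N ->
  exists2 z, z \in U & (z \notin V) && (supp z \proper supp x).
Proof.
move=> xU xV heavy.
have [j xj] : exists j, j \in supp x.
  by apply/set0Pn; rewrite supp_eq0; apply: contraNneq xV => ->; rewrite mem0v.
have small : (#|j |: ~: supp x| < \dim U)%N.
  by rewrite cardsU1 in_setC xj add1n; have := card_suppC x; lia.
have [y yU /andP[y0 yTC]] := exists_nonzero_vanishing small.
rewrite disjoints_subset setCU setCK setIC -setDE in yTC.
exact: exists_outside_supp_proper y0 (sub_proper_trans yTC (properD1 xj)).
Qed.

Lemma exists_outside_hwt_le U V : ~~ (U <= V)%VS ->
  exists2 z, z \in U & (z \notin V) && (hwt z <= n - \dim U + 1)%N.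
Proof.
case/subvPn=> x xU xV; have [w lt_xw] : exists w, (hwt x < w)%N by exists (hwt x).+1.
elim: w x xU xV lt_xw => // w IH x xU xV; rewrite ltnS => le_xw.
have [light|heavy] := leqP (hwt x) (n - \dim U + 1); first by exists x; rewrite ?xV.
have [z zU /andP[zV /proper_card lt_zx]] := exists_lighter_outside xU xV heavy.
exact: IH z zU zV (leq_trans lt_zx le_xw).
Qed.
End Support.

Theorem lemma4 (F : finFieldType) (n : nat) (C1 C2 : {vspace 'rV[F]_n}) :
  MDS C1 -> MDS C2 -> ~~ (C1 <= C2)%VS ->
  minwt [pred a : 'rV[F]_n | (a \in C1) && (a \notin (C1 :&: C2)%VS)]
  = minwt (mem C1).
Proof.
rewrite /MDS => MDS_C1 _ not_sub.
have [z zC1 /andP[zC2 light]] := exists_outside_hwt_le not_sub.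
have z0 : z != 0 by apply: contraNneq zC2 => ->; rewrite mem0v.
apply/eqP; rewrite eqn_leq; apply/andP; split.
  by rewrite MDS_C1 (leq_trans _ light) // minwt_le_hwt // inE zC1 memv_cap zC1.
by apply: minwt_sub => a; rewrite inE => /andP[].
Qed.
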